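(* Let $R>0$, let $I\subset\mathbb{R}$ be an open interval and let $x,y\colon I\to\mathbb{R}$ be continuously differentiable with $r(t):=\sqrt{x(t)^2+y(t)^2}>R$ and $|x(t)-t|<r(t)-R$ for all $t\in I$. Put $g(t)=\dfrac{x(t)-t}{r(t)-R}$. Then for each $t\in I$ the compatibility condition $$\frac{d}{dt}\left(y(t)+\sqrt{\big(r(t)-R\big)^2-(x(t)-t)^2}\right)=\frac{x(t)-t}{\sqrt{\big(r(t)-R\big)^2-(x(t)-t)^2}}$$ holds if and only if $$\left(g(t)-\frac{x(t)}{r(t)}\right)x'(t)=\left(\sqrt{1-g(t)^2}+\frac{y(t)}{r(t)}\right)y'(t).$$
   Context: In the paper this is applied to the equidistant parameterization $x,y$ of a circle of radius $R$ centered at the origin and the epigraph of a positive, twice continuously differentiable convex function $f$, for which $f(t)=y(t)+\sqrt{(r(t)-R)^2-(x(t)-t)^2}$ and $f'(t)=(x(t)-t)/\sqrt{(r(t)-R)^2-(x(t)-t)^2}$; the compatibility condition expresses that the derivative of the first expression equals the second. *)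

From Stdlib Require Import Reals.
From Coquelicot Require Import Coquelicot.
Open Scope R_scope.

Definition in_open_interval (a b : Rbar) (t : R) : Prop :=
  Rbar_lt a t /\ Rbar_lt t b.

Definition C1_on (a b : Rbar) (f df : R -> R) : Prop :=
  forall t, in_open_interval a b t -> is_derive f t (df t) /\ continuous df t.

(* Write c = r - R, w = x - t and q = sqrt (c^2 - w^2) > 0.  The chain rule
   gives (y + q)' = y' + (c r' - w (x' - 1)) / q with r' = (x x' + y y') / r,
   so the compatibility condition (y + q)' = w / q says q y' + c r' = w x'.
   Since sqrt (1 - g^2) = q / c, dividing this balance by c is exactly the
   stated relation between x' and y'. *)

From Stdlib Require Import Reals Lra.
From Coquelicot Require Import Coquelicot.
Open Scope R_scope.

Lemma is_derive_sqrt_sum_sq (f h : R -> R) (t df dh : R) :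
  is_derive f t df -> is_derive h t dh -> 0 < f t ^ 2 + h t ^ 2 ->
  is_derive (fun s => sqrt (f s ^ 2 + h s ^ 2)) t
    ((f t * df + h t * dh) / sqrt (f t ^ 2 + h t ^ 2)).
Proof.
  intros Df Dh Hpos.
  assert (Hsqrt : 0 < sqrt (f t ^ 2 + h t ^ 2)) by now apply sqrt_lt_R0.
  auto_derive.
  - repeat split; try (eexists; eassumption). exact Hpos.
  - change (fun s => f s) with f; change (fun s => h s) with h.
    rewrite (is_derive_unique _ _ _ Df), (is_derive_unique _ _ _ Dh).
    change (f t * (f t * 1) + h t * (h t * 1)) with (f t ^ 2 + h t ^ 2).
    field; lra.
Qed.

Lemma is_derive_sqrt_diff_sq (f h : R -> R) (t df dh : R) :
  is_derive f t df -> is_derive h t dh -> 0 < f t ^ 2 - h t ^ 2 ->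
  is_derive (fun s => sqrt (f s ^ 2 - h s ^ 2)) t
    ((f t * df - h t * dh) / sqrt (f t ^ 2 - h t ^ 2)).
Proof.
  intros Df Dh Hpos.
  assert (Hsqrt : 0 < sqrt (f t ^ 2 - h t ^ 2)) by now apply sqrt_lt_R0.
  auto_derive.
  - repeat split; try (eexists; eassumption). exact Hpos.
  - change (fun s => f s) with f; change (fun s => h s) with h.
    rewrite (is_derive_unique _ _ _ Df), (is_derive_unique _ _ _ Dh).
    change (f t * (f t * 1) + - (h t * (h t * 1))) with (f t ^ 2 - h t ^ 2).
    field; lra.
Qed.

Lemma is_derive_iff (f : R -> R) (t l l' : R) :
  is_derive f t l -> (is_derive f t l' <-> l' = l).
Proof.
  intros Df; split; intros H.
  - now rewrite <- (is_derive_unique _ _ _ H), (is_derive_unique _ _ _ Df).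
  - now rewrite H.
Qed.

Lemma sqrt_one_minus_sqr_div (w c : R) :
  0 < c -> sqrt (1 - (w / c) ^ 2) = sqrt (c ^ 2 - w ^ 2) / c.
Proof.
  intros Hc.
  replace (1 - (w / c) ^ 2) with ((c ^ 2 - w ^ 2) / c ^ 2) by (field; lra).
  rewrite sqrt_div_alt by (apply pow_lt; exact Hc).
  rewrite sqrt_pow2 by lra.
  reflexivity.
Qed.

Lemma eq_iff_of_sub_div (a b a' b' k : R) :
  k <> 0 -> a - b = (a' - b') / k -> (a = b <-> a' = b').
Proof.
  intros Hk Hsub; split; intros H.
  - assert (Hzero : (a' - b') / k = 0) by (rewrite <- Hsub, H; ring).
    apply Rminus_diag_uniq.
    replace (a' - b') with ((a' - b') / k * k) by (field; exact Hk).
    rewrite Hzero; ring.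
  - apply Rminus_diag_uniq. rewrite Hsub, H. unfold Rdiv. ring.
Qed.

Lemma compatibility_iff_balance (q c dr w dx dy : R) :
  q <> 0 ->
  (w / q = dy + (c * dr - w * (dx - 1)) / q <-> q * dy + c * dr = w * dx).
Proof.
  intros Hq. apply (eq_iff_of_sub_div _ _ _ _ (- q)); [lra|].
  field; exact Hq.
Qed.

Lemma velocity_relation_iff_balance (x y r c q w dx dy : R) :
  c <> 0 -> r <> 0 ->
  ((w / c - x / r) * dx = (q / c + y / r) * dy <->
   q * dy + c * ((x * dx + y * dy) / r) = w * dx).
Proof.
  intros Hc Hr. apply (eq_iff_of_sub_div _ _ _ _ (- c)); [lra|].
  field; split; assumption.
Qed.

Theorem theorem6 (R0 : R) (a b : Rbar) (x y dx dy : R -> R) :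
  0 < R0 ->
  Rbar_lt a b ->
  C1_on a b x dx ->
  C1_on a b y dy ->
  (forall t, in_open_interval a b t ->
     sqrt (x t ^ 2 + y t ^ 2) > R0 /\
     Rabs (x t - t) < sqrt (x t ^ 2 + y t ^ 2) - R0) ->
  forall t, in_open_interval a b t ->
    let r := fun s => sqrt (x s ^ 2 + y s ^ 2) in
    let g := fun s => (x s - s) / (r s - R0) in
    (is_derive (fun s => y s + sqrt ((r s - R0) ^ 2 - (x s - s) ^ 2)) t
        ((x t - t) / sqrt ((r t - R0) ^ 2 - (x t - t) ^ 2))
     <->
     (g t - x t / r t) * dx t = (sqrt (1 - g t ^ 2) + y t / r t) * dy t).
Proof.
  intros HR0 _ Hx Hy Hc t Ht r g.
  destruct (Hx t Ht) as [Dx _], (Hy t Ht) as [Dy _], (Hc t Ht) as [Hr Hw].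
  assert (Hnorm : 0 < x t ^ 2 + y t ^ 2).
  { apply sqrt_lt_0_alt. rewrite sqrt_0. lra. }
  change (sqrt (x t ^ 2 + y t ^ 2)) with (r t) in Hr, Hw.
  assert (Hgap : 0 < (r t - R0) ^ 2 - (x t - t) ^ 2).
  { apply Rabs_def2 in Hw. nra. }
  assert (Hq : 0 < sqrt ((r t - R0) ^ 2 - (x t - t) ^ 2)) by now apply sqrt_lt_R0.
  assert (Dr : is_derive (fun s => r s - R0) t ((x t * dx t + y t * dy t) / r t)).
  { replace ((x t * dx t + y t * dy t) / r t)
      with ((x t * dx t + y t * dy t) / r t - 0) by ring.
    apply (is_derive_minus r (fun _ => R0)); [|exact (is_derive_const R0 t)].
    now apply is_derive_sqrt_sum_sq. }
  assert (Dw : is_derive (fun s => x s - s) t (dx t - 1)).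
  { apply (is_derive_minus x (fun s => s)); [exact Dx | exact (is_derive_id t)]. }
  pose proof (is_derive_plus _ _ _ _ _ Dy
                (is_derive_sqrt_diff_sq _ _ _ _ _ Dr Dw Hgap)) as DF.
  eapply iff_trans; [exact (is_derive_iff _ _ _ _ DF)|].
  unfold g; rewrite sqrt_one_minus_sqr_div by lra.
  eapply iff_trans; [apply compatibility_iff_balance; lra|].
  apply iff_sym, velocity_relation_iff_balance; lra.
Qed.
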